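(* Let $R$ be a P$v$MD and let $I$ be a proper $t$-ideal of $R$. If each minimal prime of $I$ is the radical of a $v$-finite divisorial ideal, then $I$ has only finitely many minimal ($t$-)primes.
   Context: $R$ is an integral domain with quotient field $K\neq R$. For nonzero $R$-submodules $A,B$ of $K$, $(A:B)=\{x\in K: xB\subseteq A\}$. For a nonzero fractional ideal $I$, $I_v=(R:(R:I))$ and $I_t=\bigcup\{J_v: J\subseteq I \text{ nonzero finitely generated}\}$. $I$ is divisorial if $I=I_v$ and a $t$-ideal if $I=I_t$; a $v$-finite divisorial ideal is an ideal of the form $J_v$ with $J$ finitely generated. A $t$-prime is a prime $t$-ideal; a $t$-maximal ideal is an ideal maximal among proper $t$-ideals. $R$ is a P$v$MD if $R_M$ is a valuation domain for every $t$-maximal ideal $M$. *)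

(* An integral domain R is represented as a subring of its
   quotient field K (a fieldType); fractional ideals / R-submodules of K are
   Prop-valued predicates on K. *)
From HB Require Import structures.
From mathcomp Require Import all_boot all_algebra.
Set Implicit Arguments. Unset Strict Implicit. Unset Printing Implicit Defensive.
Import GRing.Theory.
Local Open Scope ring_scope.

Section Ideals.
Variable K : fieldType.
Implicit Types (R A B I J M P Q : K -> Prop).

Definition subring R :=
  [/\ R 0, R 1, (forall x y, R x -> R y -> R (x - y))
    & (forall x y, R x -> R y -> R (x * y))].
Definition quotient_field_of R :=
  forall x, exists a b, [/\ R a, R b, b != 0 & x = a / b].
Definition domain_with_qf R :=
  [/\ subring R, quotient_field_of R & exists x, ~ R x].

Definition subset_of A B := forall x, A x -> B x.
Definition same_set A B := forall x, A x <-> B x.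
Definition nonzero A := exists x, A x /\ x != 0.

Definition submodule R A :=
  [/\ A 0, (forall x y, A x -> A y -> A (x + y))
    & (forall r x, R r -> A x -> A (r * x))].

Definition colon A B : K -> Prop := fun x => forall b, B b -> A (x * b).

Definition vclos R I : K -> Prop := colon R (colon R I).

Definition fin_gen R J :=
  exists s : seq K, forall x, J x <->
    exists c : 'I_(size s) -> K,
      (forall i, R (c i)) /\ x = \sum_(i < size s) c i * s`_i.

Definition tclos R I : K -> Prop :=
  fun x => exists J, [/\ fin_gen R J, nonzero J, subset_of J I & vclos R J x].

Definition t_ideal R I := same_set I (tclos R I).

Definition int_ideal R I := submodule R I /\ subset_of I R.
Definition is_proper R I := exists x, R x /\ ~ I x.

Definition is_prime_ideal R P :=
  [/\ int_ideal R P, is_proper R P &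
      forall a b, R a -> R b -> P (a * b) -> P a \/ P b].

Definition t_maximal R M :=
  [/\ int_ideal R M, nonzero M, is_proper R M, t_ideal R M &
      forall N, int_ideal R N -> nonzero N -> is_proper R N -> t_ideal R N ->
        subset_of M N -> same_set M N].

Definition localization R M : K -> Prop :=
  fun x => exists a s, [/\ R a, R s, ~ M s & x = a / s].

Definition valuation_domain (V : K -> Prop) :=
  forall x, x != 0 -> V x \/ V x^-1.

Definition PvMD R :=
  forall M, t_maximal R M -> valuation_domain (localization R M).

Definition minimal_prime R I P :=
  [/\ is_prime_ideal R P, subset_of I P &
      forall Q, is_prime_ideal R Q -> subset_of I Q -> subset_of Q P ->
        same_set Q P].

Definition radical R A : K -> Prop :=
  fun x => R x /\ exists n : nat, A (x ^+ n).

Definition vfinite_divisorial R A :=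
  exists J, [/\ fin_gen R J, nonzero J & same_set A (vclos R J)].

End Ideals.

(* Let [T] be the ideal of those [x] in [R] that lie in [I R_P] for all but
   finitely many minimal primes [P] of [I].  Suppose [T] lies in a proper
   [t]-ideal, hence in a [t]-maximal ideal [M].  As [R_M] is a valuation
   domain, [Q = rad (I R_M) /\ R] is a minimal prime of [I], so [Q = rad A]
   with [A = J_v] and [J] finitely generated.  Then [A R_M] is generated by
   some [g] in [A], say [w A <= R g] with [w] outside [M], and [s g^n] lies in
   [I] for some [s] outside [M].  Every minimal prime [P <> Q] misses some [x]
   in [A], and [s w^n x^n] lies in [I]; so [s w^n] lies in [T <= M], which is
   absurd.  Hence [J_v = R] for some finitely generated [J <= T], and every
   minimal prime [P] outside some finite set misses a [z] with [z J <= I].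
   But [z] lies in [(z J)_v <= I_t = I <= P], so there is no such [P]. *)

From mathcomp Require Import all_boot all_algebra.
From mathcomp Require boolp classical_sets.
From Stdlib Require Import Classical.
Set Implicit Arguments. Unset Strict Implicit. Unset Printing Implicit Defensive.
Import GRing.Theory.
Local Open Scope ring_scope.

Definition seq_in (T : eqType) (l : seq T) (X : T -> Prop) :=
  forall w, w \in l -> X w.

Lemma seq_in_cons (T : eqType) (a : T) l X :
  seq_in (a :: l) X <-> X a /\ seq_in l X.
Proof.
split=> [h|[Xa Xl] w]; last by rewrite in_cons => /orP[/eqP->|/Xl].
by split=> [|w wl]; apply: h; rewrite in_cons ?eqxx ?wl ?orbT.
Qed.

Lemma seq_choice (T : eqType) (U : Type) (u0 : U) (l : seq T) (P : T -> U -> Prop) :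
  seq_in l (fun v => exists m, P v m) -> exists f : T -> U, seq_in l (fun v => P v (f v)).
Proof.
move=> hl; have /boolp.choice [f hf] : forall v, exists m, v \in l -> P v m.
  by move=> v; case: (classic (v \in l)) => [/hl [m Pm]|vl]; [exists m | exists u0].
by exists f => v /hf.
Qed.

Section Subring.
Variables (K : fieldType) (R : K -> Prop).
Hypothesis sR : subring R.

Lemma subring0 : R 0. Proof. by case: sR. Qed.
Lemma subring1 : R 1. Proof. by case: sR. Qed.
Lemma subringB x y : R x -> R y -> R (x - y). Proof. by case: sR => _ _ + _; apply. Qed.
Lemma subringM x y : R x -> R y -> R (x * y). Proof. by case: sR => _ _ _; apply. Qed.

Lemma subringD x y : R x -> R y -> R (x + y).
Proof.
by move=> Rx Ry; rewrite -[y]opprK -[- y]sub0r; apply/subringB/subringB/Ry/subring0.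
Qed.

Lemma subringX x n : R x -> R (x ^+ n).
Proof.
by move=> Rx; elim: n => [|n IH]; rewrite ?exprS; [apply: subring1 | apply: subringM].
Qed.

Lemma submodule_mulr y : submodule R (fun w => R (y * w)).
Proof.
split=> [|a b Ra Rb|r a Rr Ra]; first by rewrite mulr0; apply: subring0.
  by rewrite mulrDr; apply: subringD.
by rewrite mulrCA; apply: subringM.
Qed.

Definition span (l : seq K) : K -> Prop := fun x =>
  exists c : 'I_(size l) -> K, (forall i, R (c i)) /\ x = \sum_(i < size l) c i * l`_i.

Lemma span_subset X l : submodule R X -> seq_in l X -> subset_of (span l) X.
Proof.
case=> X0 XD XM lX x [c [Rc ->]].
by elim/big_ind: _ => // i _; apply/XM/lX/mem_nth.
Qed.

Lemma mem_span l w : w \in l -> span l w.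
Proof.
move=> wl; have il : (index w l < size l)%N by rewrite index_mem.
exists (fun i : 'I_(size l) => if val i == index w l then 1 else 0); split.
  by move=> i; case: ifP => _; [apply: subring1 | apply: subring0].
rewrite (bigD1 (Ordinal il)) //= eqxx mul1r nth_index // big1 ?addr0 // => i ni.
by case: eqP => [iw|_]; rewrite ?mul0r //; case/eqP: ni; apply: val_inj.
Qed.

Lemma span_nonzero l x : span l x -> x != 0 -> exists2 w, w \in l & w != 0.
Proof.
move=> [c [_ ->]] nz; apply: NNPP => l0; case/eqP: nz; apply: big1 => i _.
have [->|wi] := eqVneq l`_i 0; first by rewrite mulr0.
by case: l0; exists l`_i => //; apply: mem_nth.
Qed.

(* [vgen l] is [(l)_v], for the ideal generated by [l]. *)
Definition vgen (l : seq K) : K -> Prop :=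
  fun x => forall y, seq_in l (fun w => R (y * w)) -> R (y * x).

Lemma vgen_mem l w : w \in l -> vgen l w.
Proof. by move=> wl y; apply. Qed.

Lemma vgen_submodule l : submodule R (vgen l).
Proof.
split=> [y _|a b ha hb y hy|r a Rr ha y hy]; case: (submodule_mulr y) => // _.
  by move=> + _; apply; [apply: ha | apply: hb].
by move=> _; apply=> //; apply: ha.
Qed.

Lemma vgen_trans l l' : seq_in l' (vgen l) -> subset_of (vgen l') (vgen l).
Proof. by move=> l'l x hx y hy; apply: hx => w /l'l; apply. Qed.

Lemma vgen_scale b l x : vgen l x -> vgen [seq b * v | v <- l] (b * x).
Proof.
move=> hx y hy; rewrite mulrA; apply: hx => w wl.
by rewrite -mulrA; apply/hy/map_f.
Qed.

Lemma vclosE J l : same_set J (span l) -> same_set (vclos R J) (vgen l).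
Proof.
move=> eJ x; split=> [hx y hy | hx b hb]; rewrite mulrC.
  by apply: hx => j /eJ; apply: (span_subset (submodule_mulr y) hy).
by apply: hx => w /mem_span /eJ; apply: hb.
Qed.

Lemma tclosP X x : submodule R X -> tclos R X x <->
  exists l, [/\ seq_in l X, exists2 w, w \in l & w != 0 & vgen l x].
Proof.
move=> sX; split.
  case=> J [[l eJ] [j [Jj j0]] JX vx]; exists l; split.
  - by move=> w /mem_span /eJ /JX.
  - by apply: span_nonzero j0; apply/eJ.
  - exact/(vclosE eJ).
case=> l [lX [w wl w0] vx]; exists (span l); split.
- by exists l.
- by exists w; split=> //; apply: mem_span.
- exact: span_subset.
- exact/(vclosE (fun _ => iff_refl _)).
Qed.

End Subring.

Section PrimeIdeals.
Variables (K : fieldType) (R : K -> Prop).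
Hypothesis sR : subring R.
Variable P : K -> Prop.
Hypothesis pP : is_prime_ideal R P.

Lemma prime_not1 : ~ P 1.
Proof.
by case: pP => [[[_ _ PM] _] [x [Rx nPx]] _] P1; apply: nPx; rewrite -[x]mulr1; apply: PM.
Qed.

Lemma prime_notin_neq0 x : ~ P x -> x != 0.
Proof.
by case: pP => [[[P0 _ _] _] _ _] nPx; apply/eqP => x0; apply: nPx; rewrite x0.
Qed.

Lemma prime_notM a b : R a -> R b -> ~ P a -> ~ P b -> ~ P (a * b).
Proof. by case: pP => _ _ pr Ra Rb nPa nPb /(pr _ _ Ra Rb) []. Qed.

Lemma prime_memX x n : R x -> P (x ^+ n) -> P x.
Proof.
move=> Rx; elim: n => [|n IH]; first by move/prime_not1.
by rewrite exprS; case: pP => _ _ pr /(pr _ _ Rx (subringX sR n Rx)) [|/IH].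
Qed.

Lemma prime_notX x n : R x -> ~ P x -> ~ P (x ^+ n).
Proof. by move=> Rx nPx /(prime_memX Rx). Qed.

End PrimeIdeals.

Lemma radical_not_sub_minimal (K : fieldType) (R I P Q A : K -> Prop) :
  subring R -> minimal_prime R I P -> is_prime_ideal R Q -> subset_of I Q ->
  same_set Q (radical R A) -> ~ same_set P Q -> exists2 x, A x & ~ P x.
Proof.
move=> sR [pP IP minP] pQ IQ eQ nPQ; apply: NNPP => nAP; apply: nPQ => x.
have QP : subset_of Q P.
  move=> z /eQ [Rz [n Azn]]; apply: (prime_memX sR pP Rz (n := n)).
  by apply: NNPP => nP; apply: nAP; exists (z ^+ n).
by split=> [/(minP Q pQ IQ QP)|/QP].
Qed.

Section Chains.
Variables (K : fieldType) (F : (K -> Prop) -> Prop).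
Hypotheses (F0 : exists N, F N)
  (Ftot : forall N N', F N -> F N' -> subset_of N N' \/ subset_of N' N).

Definition chain_union : K -> Prop := fun x => exists2 N, F N & N x.

Lemma chain_union_seq_in l : seq_in l chain_union -> exists2 N, F N & seq_in l N.
Proof.
elim: l => [_|a l IH /seq_in_cons [[Na FNa Na_a] /IH [N FN lN]]].
  by case: F0 => N FN; exists N.
have [NaN|NNa] := Ftot FNa FN.
  by exists N => //; apply/seq_in_cons; split; [apply: NaN | ].
by exists Na => //; apply/seq_in_cons; split=> // w /lN /NNa.
Qed.

End Chains.

Section TIdeals.
Variables (K : fieldType) (R : K -> Prop).
Hypothesis dR : domain_with_qf R.

Let sR : subring R. Proof. by case: dR. Qed.

Lemma vgen1_nonzero l : vgen R l 1 -> exists2 w, w \in l & w != 0.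
Proof.
case: dR => _ _ [x nRx] l1; apply: NNPP => l0; apply: nRx.
rewrite -[x]mulr1; apply: l1 => w wl; have [->|w0] := eqVneq w 0.
  by rewrite mulr0; apply: subring0.
by case: l0; exists w.
Qed.

Lemma t_ideal_vgen X l x : submodule R X -> t_ideal R X -> seq_in l X ->
  (exists2 w, w \in l & w != 0) -> vgen R l x -> X x.
Proof. by move=> sX tX lX l0 lx; apply/tX/(tclosP sR _ sX); exists l. Qed.

Lemma sub_tclos X : int_ideal R X -> nonzero X -> subset_of X (tclos R X).
Proof.
move=> [sX _] [m [Xm m0]] x Xx; apply/(tclosP sR _ sX); exists [:: m; x]; split.
- by move=> w; rewrite !inE => /orP[/eqP->|/eqP->].
- by exists m; rewrite ?inE ?eqxx.
- by apply: vgen_mem; rewrite !inE eqxx orbT.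
Qed.

Lemma tclos_sub_R X : int_ideal R X -> subset_of (tclos R X) R.
Proof.
move=> [sX XR] x /(tclosP sR _ sX) [l [lX _ lx]].
by rewrite -[x]mul1r; apply: lx => w /lX /XR; rewrite mul1r.
Qed.

(* Equivalently, [N_t] is a proper ideal. *)
Definition t_proper (N : K -> Prop) := forall l, seq_in l N -> ~ vgen R l 1.

Lemma t_ideal_t_proper N :
  int_ideal R N -> is_proper R N -> t_ideal R N -> t_proper N.
Proof.
move=> [sN _] [z [Rz nNz]] tN l lN l1; apply: nNz; rewrite -[z]mulr1.
case: (sN) => _ _; apply=> //.
exact: t_ideal_vgen sN tN lN (vgen1_nonzero l1) l1.
Qed.

Lemma t_maximal_prime M : t_maximal R M -> is_prime_ideal R M.
Proof.
case=> iM nzM pM tM maxM; split=> // a b Ra Rb Mab.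
have [[M0 MD MM] MR] := iM.
case: (classic (M a)) => [|nMa]; [by left | right].
have [->|b0] := eqVneq b 0; first exact: M0.
pose N x := R x /\ M (b * x).
have sN : submodule R N.
  split=> [|x y [Rx Mx] [Ry My]|r x Rr [Rx Mx]].
  - by split; [apply: subring0 | rewrite mulr0].
  - by split; [apply: subringD | rewrite mulrDr; apply: MD].
  - by split; [apply: subringM | rewrite mulrCA; apply: MM].
have iN : int_ideal R N by split=> // x [].
have MN : subset_of M N by move=> x Mx; split; [apply: MR | apply: MM].
have nzN : nonzero N by case: nzM => m [/MN Nm m0]; exists m.
have tN : t_ideal R N.
  move=> x; split; first exact: sub_tclos.
  move=> Nx; split; first exact: tclos_sub_R Nx.
  case/(tclosP sR _ sN): Nx => l [lN [w wl w0] lx].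
  apply: (t_ideal_vgen (proj1 iM) tM _ _ (vgen_scale (b := b) lx)).
  - by move=> _ /mapP [v /lN [_ Mbv] ->].
  - by exists (b * w); [apply: map_f | apply: mulf_neq0].
case: (classic (N 1)) => [[_]|nN1]; first by rewrite mulr1.
have prN : is_proper R N by exists 1; split=> //; apply: subring1.
by case: nMa; apply/(maxM N iN nzN prN tN MN); split=> //; rewrite mulrC.
Qed.

Definition adjoin (M : K -> Prop) x : K -> Prop :=
  fun z => exists m r, [/\ M m, R r & z = m + r * x].

Lemma adjoin_int_ideal M x : int_ideal R M -> R x -> int_ideal R (adjoin M x).
Proof.
move=> [[M0 MD MM] MR] Rx; split; last first.
  by move=> _ [m [r [Mm Rr ->]]]; apply: subringD (MR m Mm) (subringM sR Rr Rx).
split=> [|_ _ [m [r [Mm Rr ->]]] [m' [r' [Mm' Rr' ->]]]|s _ Rs [m [r [Mm Rr ->]]]].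
- by exists 0, 0; rewrite mul0r addr0; split=> //; apply: subring0.
- exists (m + m'), (r + r'); split; [exact: MD | exact: subringD |].
  by rewrite mulrDl addrACA.
- exists (s * m), (s * r); split; [exact: MM | exact: subringM |].
  by rewrite mulrDr mulrA.
Qed.

Lemma t_proper_adjoin M x :
  submodule R M -> t_proper M -> tclos R M x -> t_proper (adjoin M x).
Proof.
move=> sM tpM /(tclosP sR _ sM) [l [lM _ lx]] l' l'A l'1.
have [f hf] := seq_choice 0 l'A.
pose L := [seq f v | v <- l'] ++ l.
have Lx : vgen R L x.
  by apply: vgen_trans lx => w wl; apply: vgen_mem; rewrite mem_cat wl orbT.
apply: (tpM L).
  by move=> w; rewrite mem_cat => /orP[/mapP [v /hf [r [Mfv _ _]] ->]|/lM].
apply: vgen_trans l'1 => v vl'; have [r [_ Rr ->]] := hf v vl'.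
case: (vgen_submodule sR L) => _ LD LM; apply: LD; last exact: LM.
by apply: vgen_mem; rewrite mem_cat map_f.
Qed.

Lemma t_maximal_of_maximal M : int_ideal R M -> nonzero M -> t_proper M ->
  (forall N, int_ideal R N -> t_proper N -> subset_of M N -> subset_of N M) ->
  t_maximal R M.
Proof.
move=> iM nzM tpM maxM; have [[M0 _ _] MR] := iM.
have nM1 : ~ M 1.
  by move=> M1; apply: (tpM [:: 1]) => [w /[!inE]/eqP->|]; last exact: vgen_mem (mem_head _ _).
split=> //; first by exists 1; split=> //; apply: subring1.
  move=> x; split; first exact: sub_tclos.
  move=> Mx; have Rx := tclos_sub_R iM Mx.
  apply: (maxM (adjoin M x)); first exact: adjoin_int_ideal.
  - exact: t_proper_adjoin (proj1 iM) tpM Mx.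
  - by move=> m Mm; exists m, 0; rewrite mul0r addr0; split=> //; apply: subring0.
  - by exists 0, 1; rewrite add0r mul1r; split=> //; apply: subring1.
move=> N iN _ prN tN MN x; split; first exact: MN.
exact: maxM (t_ideal_t_proper iN prN tN) MN x.
Qed.

Section Zorn.
Variable T : K -> Prop.

Let above_t_proper N := [/\ int_ideal R N, subset_of T N & t_proper N].

Lemma above_t_proper_chain_union F : (exists N, F N) ->
  (forall N N', F N -> F N' -> subset_of N N' \/ subset_of N' N) ->
  (forall N, F N -> above_t_proper N) -> above_t_proper (chain_union F).
Proof.
move=> F0 Ftot FP; have [N0 FN0] := F0.
have [[[N00 _ _] _] TN0 _] := FP N0 FN0.
split; first split; first split.
- by exists N0.
- move=> x y xU yU; have [|N FN] := chain_union_seq_in F0 Ftot (l := [:: x; y]).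
    by move=> w /[!inE] /orP[/eqP->|/eqP->].
  have [[[_ ND _] _] _ _] := FP N FN.
  by move=> xyN; exists N => //; apply: ND; apply: xyN; rewrite !inE eqxx ?orbT.
- move=> r x Rr [N FN Nx]; have [[[_ _ NM] _] _ _] := FP N FN.
  by exists N => //; apply: NM.
- by move=> x [N /FP [[_ NR] _ _] /NR].
- by move=> x /TN0; exists N0.
- move=> l /(chain_union_seq_in F0 Ftot) [N /FP [_ _ tpN]]; exact: tpN.
Qed.

Lemma exists_t_maximal : int_ideal R T -> nonzero T -> t_proper T ->
  exists M, t_maximal R M /\ subset_of T M.
Proof.
move=> iT nzT tpT; pose S := {N | above_t_proper N}.
pose le (N N' : S) := boolp.asbool (subset_of (sval N) (sval N')).
have leP N N' : reflect (subset_of (sval N) (sval N')) (le N N') := boolp.asboolP _.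
have TS (N : S) : subset_of T (sval N) by case: (svalP N).
have [[M [iM TM tpM]] maxM] : exists M : S, classical_sets.premaximal le M.
  apply: (classical_sets.ZL_preorder (exist _ T (And3 iT (fun _ => id) tpT))).
  - by move=> N; apply/leP.
  - by move=> N1 N2 N3 /leP h12 /leP h23; apply/leP => x /h12 /h23.
  move=> C Ctot; pose F N := N = T \/ exists2 N' : S, C N' & N = sval N'.
  have FS N : F N -> above_t_proper N.
    by case=> [->|[N' _ ->]]; [split | apply: (svalP N')].
  have Ftot N N' : F N -> F N' -> subset_of N N' \/ subset_of N' N.
    case=> [->|[N1 CN1 ->]] [->|[N2 CN2 ->]]; [by left | by left | by right |].
    by case: (Ctot N1 N2 CN1 CN2) => /leP; [left | right].
  have U_above := above_t_proper_chain_union (ex_intro _ T (or_introl erefl)) Ftot FS.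
  exists (exist _ _ U_above) => N CN; apply/leP => x Nx.
  by exists (sval N) => //; right; exists N.
exists M; split=> //; apply: t_maximal_of_maximal => //.
  by case: nzT => x [/TM Mx x0]; exists x.
move=> N iN tpN MN; have TN : subset_of T N by move=> x /TM /MN.
by have /leP := maxM (exist _ N (And3 iN TN tpN)) (introT (boolp.asboolP _) MN).
Qed.

End Zorn.

End TIdeals.

Section ValuationLocalization.
Variables (K : fieldType) (R M : K -> Prop).
Hypotheses (sR : subring R) (pM : is_prime_ideal R M)
  (vM : valuation_domain (localization R M)).

Lemma local_compare a b : R a -> R b -> exists u w,
  [/\ R u, R w, ~ M w & w * b = u * a \/ w * a = u * b].
Proof.
move=> Ra Rb; have [R0 R1] := (subring0 sR, subring1 sR).
have nM1 := prime_not1 pM.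
have [->|a0] := eqVneq a 0; first by exists 0, 1; split=> //; right; rewrite mul1r !mul0r.
have [->|b0] := eqVneq b 0; first by exists 0, 1; split=> //; left; rewrite mul1r !mul0r.
have ba0 : b / a != 0 by rewrite mulf_neq0 ?invr_eq0.
have [[u [w [Ru Rw nMw e]]]|[u [w [Ru Rw nMw e]]]] := vM ba0;
  have w0 := prime_notin_neq0 pM nMw; exists u, w; split=> //.
  by left; apply/eqP; rewrite mulrC -eqr_div // e.
by right; apply/eqP; rewrite mulrC -eqr_div // -e invf_div.
Qed.

Lemma local_common_divisor l a : R a -> seq_in l R -> exists g w,
  [/\ g \in a :: l, R w, ~ M w &
      forall v, v \in a :: l -> exists2 u, R u & w * v = u * g].
Proof.
elim: l a => [|b l IH] a Ra.
  move=> _; exists a, 1; split; [exact: mem_head | exact: subring1 | exact: prime_not1 pM |].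
  by move=> v /[!inE] /eqP->; exists 1; first exact: subring1.
move=> Rbl; have [Rb Rl] := (seq_in_cons b l R).1 Rbl.
have [g [w [gl Rw nMw hw]]] := IH b Rb Rl.
have [u' [w' [Ru' Rw' nMw' [e|e]]]] := local_compare Ra (Rbl g gl).
all: have Rww' := subringM sR Rw Rw'; have nMww' := prime_notM pM Rw Rw' nMw nMw'.
  exists a, (w * w'); split=> //; first exact: mem_head.
  move=> v; rewrite in_cons => /orP[/eqP->|/hw [u Ru e']].
    by exists (w * w'); first exact: subringM.
  exists (u * u'); first exact: subringM.
  by rewrite -mulrA [w' * v]mulrC mulrA e' -mulrA [g * w']mulrC e mulrA.
exists g, (w * w'); split=> //; first by rewrite in_cons gl orbT.
move=> v; rewrite in_cons => /orP[/eqP->|/hw [u Ru e']].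
  by exists (w * u'); [exact: subringM | rewrite -mulrA e mulrA].
by exists (u * w'); [exact: subringM | rewrite mulrAC e' mulrAC].
Qed.

Lemma vfinite_local_principal A : vfinite_divisorial R A -> subset_of A R ->
  exists g w, [/\ A g, g != 0, R w, ~ M w &
                  forall x, A x -> exists2 r, R r & w * x = r * g].
Proof.
case=> J [[s eJ] [j [Jj j0]] eA] AR.
have eAs : same_set A (vgen R s) by move=> x; apply: iff_trans (eA x) (vclosE sR eJ x).
have sA : seq_in s A by move=> w /(vgen_mem (R := R)) /eAs.
have [d ds d0] := span_nonzero (proj1 (eJ j) Jj) j0.
case: s eJ eAs sA ds => [//|a l] _ eAs sA ds.
have Rl : seq_in l R by move=> v vl; apply/AR/sA; rewrite in_cons vl orbT.
have [g [w [gl Rw nMw hw]]] := local_common_divisor (AR a (sA a (mem_head _ _))) Rl.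
have w0 := prime_notin_neq0 pM nMw.
have g0 : g != 0.
  apply: contra_neq d0 => g0; have [u _] := hw d ds.
  by rewrite g0 mulr0 => /eqP; rewrite mulf_eq0 (negbTE w0) => /eqP.
exists g, w; split=> // [|x /eAs Ax]; first exact: sA.
exists (w / g * x); last by rewrite mulrAC divfK.
by apply: Ax => v /hw [u Ru e]; rewrite mulrAC e mulfK.
Qed.

Section LocalRadical.
Variable I : K -> Prop.
Hypotheses (iI : int_ideal R I) (IM : subset_of I M).

(* The contraction to [R] of the radical of [I R_M]. *)
Definition local_radical : K -> Prop :=
  fun x => R x /\ exists s n, [/\ R s, ~ M s & I (s * x ^+ n)].

Lemma local_radical_sub : subset_of local_radical M.
Proof.
move=> x [Rx [s [n [Rs nMs Is]]]].
case: pM => _ _ /(_ _ _ Rs (subringX sR n Rx) (IM Is)) [/nMs [] |].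
exact: (prime_memX sR pM Rx).
Qed.

Lemma sub_local_radical : subset_of I local_radical.
Proof.
move=> x Ix; split; first by case: iI => _; apply.
exists 1, 1%N; split; [exact: subring1 | exact: prime_not1 pM | by rewrite mul1r expr1].
Qed.

Lemma local_radical_dvd x y u w : R y -> R u -> R w -> ~ M w ->
  w * y = u * x -> local_radical x -> local_radical y.
Proof.
move=> Ry Ru Rw nMw e [_ [s [n [Rs nMs Is]]]]; split=> //.
exists (s * w ^+ n), n; split.
- by apply: subringM (subringX sR n Rw).
- exact: (prime_notM pM Rs (subringX sR n Rw) nMs (prime_notX sR pM (n := n) Rw nMw)).
- rewrite -mulrA -exprMn e exprMn mulrCA.
  by case: iI => [[_ _ IMul] _]; apply: IMul (subringX sR n Ru) Is.
Qed.

Lemma local_radicalX x k : R x -> local_radical (x ^+ k) -> local_radical x.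
Proof.
move=> Rx [_ [s [n [Rs nMs Is]]]]; split=> //.
by exists s, (k * n)%N; rewrite exprM.
Qed.

Lemma local_radical_prime : is_prime_ideal R local_radical.
Proof.
have [[_ _ IMul] IR] := iI.
have LR : subset_of local_radical R by move=> x [].
split; first split=> //; first split.
- by apply: sub_local_radical; case: iI => [[]].
- move=> x y Qx Qy; have [Rx Ry] := (LR x Qx, LR y Qy).
  have [u [w [Ru Rw nMw [e|e]]]] := local_compare Rx Ry.
    apply: local_radical_dvd (subringD sR Rx Ry) (subringD sR Rw Ru) Rw nMw _ Qx.
    by rewrite mulrDr e mulrDl.
  apply: local_radical_dvd (subringD sR Rx Ry) (subringD sR Ru Rw) Rw nMw _ Qy.
  by rewrite mulrDr e mulrDl.
- move=> r x Rr [Rx [s [n [Rs nMs Is]]]]; split; first exact: subringM.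
  by exists s, n; split=> //; rewrite exprMn mulrCA; apply: IMul (subringX sR n Rr) Is.
- exists 1; split; first exact: subring1.
  by move/local_radical_sub; apply: prime_not1 pM.
move=> a b Ra Rb Qab; have [u [w [Ru Rw nMw [e|e]]]] := local_compare Ra Rb.
  right; apply: (local_radicalX (k := 2) Rb).
  apply: local_radical_dvd (subringX sR 2 Rb) Ru Rw nMw _ Qab.
  by rewrite expr2 mulrA e mulrA.
left; apply: (local_radicalX (k := 2) Ra).
apply: local_radical_dvd (subringX sR 2 Ra) Ru Rw nMw _ Qab.
by rewrite expr2 mulrA e (mulrC a) mulrA.
Qed.

Lemma local_radical_minimal : minimal_prime R I local_radical.
Proof.
split; [exact: local_radical_prime | exact: sub_local_radical |].
move=> Q pQ IQ QL x; split; first exact: QL.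
case=> Rx [s [n [Rs nMs /IQ Qs]]].
case: (pQ) => _ _ /(_ _ _ Rs (subringX sR n Rx) Qs) [/QL /local_radical_sub /nMs [] |].
exact: (prime_memX sR pQ Rx).
Qed.

End LocalRadical.

End ValuationLocalization.

Section CofiniteSaturation.
Variables (K : fieldType) (R I : K -> Prop).
Hypotheses (dR : domain_with_qf R) (iI : int_ideal R I).

Let sR : subring R. Proof. by case: dR. Qed.

Definition listed (P : K -> Prop) (Ps : seq (K -> Prop)) :=
  exists i : nat, (i < size Ps)%N /\ same_set P (nth (fun _ => False) Ps i).

Lemma listed_catl P Ps1 Ps2 : listed P Ps1 -> listed P (Ps1 ++ Ps2).
Proof. by case=> i [lt e]; exists i; rewrite size_cat nth_cat lt ltn_addr. Qed.

Lemma listed_catr P Ps1 Ps2 : listed P Ps2 -> listed P (Ps1 ++ Ps2).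
Proof.
case=> i [lt e]; exists (size Ps1 + i)%N.
by rewrite nth_cat (ltnNge _ (size Ps1)) leq_addr addKn size_cat ltn_add2l.
Qed.

(* [l] lies in [I R_P] for all but finitely many minimal primes [P] of [I]. *)
Definition cofinitely_local (l : seq K) :=
  exists Ps, forall P, minimal_prime R I P -> ~ listed P Ps ->
    exists z, [/\ R z, ~ P z & seq_in l (fun w => I (w * z))].

Lemma cofinitely_local_cat l1 l2 :
  cofinitely_local l1 -> cofinitely_local l2 -> cofinitely_local (l1 ++ l2).
Proof.
move=> [Ps1 h1] [Ps2 h2]; exists (Ps1 ++ Ps2) => P mP nP.
have [z1 [Rz1 nPz1 Iz1]] := h1 P mP (fun h => nP (listed_catl _ h)).
have [z2 [Rz2 nPz2 Iz2]] := h2 P mP (fun h => nP (listed_catr _ h)).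
have [[_ _ IM] _] := iI; have [pP _ _] := mP.
exists (z1 * z2); split; [exact: subringM | exact: (prime_notM pP Rz1 Rz2 nPz1 nPz2) |].
move=> w; rewrite mem_cat => /orP[/Iz1 Iw|/Iz2 Iw].
  by rewrite mulrA mulrC; apply: IM.
by rewrite mulrCA; apply: IM.
Qed.

Definition cofinite_saturation : K -> Prop :=
  fun x => R x /\ cofinitely_local [:: x].

Lemma cofinitely_local_seq l : seq_in l cofinite_saturation -> cofinitely_local l.
Proof.
elim: l => [_|a l IH /seq_in_cons [[_ ha] /IH hl]]; last exact: cofinitely_local_cat ha hl.
exists [::] => P [pP _ _] _.
by exists 1; split; [exact: subring1 sR | exact: prime_not1 pP |].
Qed.

Lemma sub_cofinite_saturation : subset_of I cofinite_saturation.
Proof.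
move=> x Ix; split; first by case: iI => _; apply.
exists [::] => P [pP _ _] _; exists 1; split; [exact: subring1 sR | exact: prime_not1 pP |].
by move=> _ /[!inE] /eqP->; rewrite mulr1.
Qed.

Lemma cofinite_saturation_int_ideal : int_ideal R cofinite_saturation.
Proof.
have [[I0 ID IM] _] := iI.
split; last by move=> x [].
split.
- exact: sub_cofinite_saturation I0.
- move=> x y [Rx hx] [Ry hy]; split; first exact: subringD.
  have [Ps hPs] := cofinitely_local_cat hx hy.
  exists Ps => P mP nP; have [z [Rz nPz Iz]] := hPs P mP nP.
  exists z; split=> // _ /[!inE] /eqP->; rewrite mulrDl.
  by apply: ID; apply: Iz; rewrite !inE eqxx ?orbT.
- move=> r x Rr [Rx [Ps hPs]]; split; first exact: subringM.
  exists Ps => P mP nP; have [z [Rz nPz Iz]] := hPs P mP nP.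
  exists z; split=> // _ /[!inE] /eqP->; rewrite -mulrA.
  by apply: IM => //; apply: Iz; apply: mem_head.
Qed.

Lemma finite_minimal_primes_of_not_t_proper : t_ideal R I ->
  ~ t_proper R cofinite_saturation ->
  exists Ps, forall P, minimal_prime R I P -> listed P Ps.
Proof.
move=> tI ntp; have [l [lT l1]] : exists l, seq_in l cofinite_saturation /\ vgen R l 1.
  by apply: NNPP => nl; apply: ntp => l lT l1; apply: nl; exists l.
have [Ps hPs] := cofinitely_local_seq lT.
exists Ps => P mP; apply: NNPP => nP.
have [z [Rz nPz Iz]] := hPs P mP nP.
have [pP IP _] := mP; have z0 := prime_notin_neq0 pP nPz.
apply: nPz; apply: IP; rewrite -[z]mulr1.
apply: (t_ideal_vgen dR (proj1 iI) tI _ _ (vgen_scale (b := z) l1)).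
- by move=> _ /mapP [w /Iz Iw ->]; rewrite mulrC.
- have [w wl w0] := vgen1_nonzero dR l1; exists (z * w); first exact: map_f.
  by rewrite mulf_neq0.
Qed.

Lemma cofinite_saturation_not_sub M : PvMD R ->
  (forall P, minimal_prime R I P ->
     exists A, [/\ vfinite_divisorial R A, subset_of A R & same_set P (radical R A)]) ->
  t_maximal R M -> subset_of I M -> exists2 S, cofinite_saturation S & ~ M S.
Proof.
move=> pv hyp tmM IM; have pM := t_maximal_prime dR tmM; have vM := pv M tmM.
pose Q := local_radical R M I.
have mQ : minimal_prime R I Q := local_radical_minimal sR pM vM iI IM.
have [A [vA AR eQ]] := hyp Q mQ.
have [g [w [Ag g0 Rw nMw hw]]] := vfinite_local_principal sR pM vM vA AR.
have [Rg [s [n [Rs nMs Is]]]] : Q g.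
  by apply/eQ; split; [apply: AR | exists 1%N; rewrite expr1].
have Rwn := subringX sR n Rw.
have nMS : ~ M (s * w ^+ n) := prime_notM pM Rs Rwn nMs (prime_notX sR pM Rw nMw).
exists (s * w ^+ n) => //; split; first exact: subringM.
exists [:: Q] => P mP nPQ; have [pP _ _] := mP; have [pQ IQ _] := mQ.
have [x Ax nPx] : exists2 x, A x & ~ P x.
  by apply: radical_not_sub_minimal sR mP pQ IQ eQ _ => ePQ; apply: nPQ; exists 0%N.
have Rx := AR x Ax; have [r Rr e] := hw x Ax.
exists (x ^+ n); split; [exact: subringX | exact: (prime_notX sR pP (n := n) Rx nPx) |].
move=> _ /[!inE] /eqP->; rewrite -mulrA -exprMn e exprMn mulrCA.
by case: iI => [[_ _ IMul] _]; apply: IMul (subringX sR n Rr) Is.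
Qed.

End CofiniteSaturation.

Theorem proposition1p4 (K : fieldType) (R I : K -> Prop) :
  domain_with_qf R -> PvMD R ->
  int_ideal R I -> nonzero I -> is_proper R I -> t_ideal R I ->
  (forall P, minimal_prime R I P ->
     exists A, [/\ vfinite_divisorial R A, subset_of A R &
                   same_set P (radical R A)]) ->
  exists Ps : seq (K -> Prop),
    forall P, minimal_prime R I P ->
      exists i : nat, (i < size Ps)%N /\ same_set P (nth (fun _ => False) Ps i).
Proof.
move=> dR pv iI nzI _ tI hyp.
have [tpT|] := classic (t_proper R (cofinite_saturation R I)); last first.
  exact: finite_minimal_primes_of_not_t_proper.
have IT := sub_cofinite_saturation dR iI.
have nzT : nonzero (cofinite_saturation R I) by case: nzI => x [/IT Tx x0]; exists x.
have [M [tmM TM]] := exists_t_maximal dR (cofinite_saturation_int_ideal dR iI) nzT tpT.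
have IM : subset_of I M by move=> x /IT /TM.
have [S TS nMS] := cofinite_saturation_not_sub dR iI pv hyp tmM IM.
by case: nMS; apply: TM.
Qed.
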